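(* Assume the distribution $\mathcal D_2(\lambda)$ defined in the context and consider its marginal on $\mathbf X_1\setminus\{X_a\}$, with structures ranging over DAGs on $\mathbf X_1\setminus\{X_a\}$ with in-degree at most $k$. There is a unique optimal Markov equivalence class for this marginal, and the difference in scores between the optimal equivalence class and the second-best equivalence class is at least $\beta$.
   Context: Entropies use the natural logarithm; $k$ is a fixed positive integer. For a set of variables, a family is $\langle Y,\Pi\rangle$ with $\Pi$ not containing $Y$ and $|\Pi|\le k$, with $H(\langle Y,\Pi\rangle)=H(Y\mid\Pi)$; DAGs are identified with their sets of families and have score $\mathcal S(G)=-\sum_{f\in G}H(f)$. Markov-equivalent DAGs (same conditional independence constraints) form equivalence classes (ECs) with a common score. Construction. $\mathcal D_1$ is a distribution over a finite set $\mathbf X_1$ of at least $k$ discrete variables, containing a variable $X_a$, such that for some $\alpha,\beta>0$: (I) among DAGs over $\mathbf X_1$ with in-degree $\le k$ there is a unique optimal EC, with score gap at least $\beta$ to the next-best EC; (II) $X_a$ has no children in any structure of the optimal EC; (III) $H(X_a\mid\mathbf X_1\setminus\{X_a\})=\alpha$. Let $\mathbf X=\mathbf X_1\cup\{X_b\}$, $d=|\mathbf X|$. For $\lambda\in(0,\min(\alpha,\beta/(3d)))$, $\mathcal D_2(\lambda)$ is a distribution on $\mathbf X$ with marginal $\mathcal D_1$ on $\mathbf X_1$ such that: (IV) there is a hidden Bernoulli variable $C$ independent of $\mathbf X_1$ with $P[X_b=X_a\mid C=1]=1$ and $X_b$ independent of $\mathbf X_1$ given $C=0$; (V) $\max(H(X_b\mid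 X_a),H(X_a\mid X_b))=\lambda$. *)

From mathcomp Require Import all_boot all_order all_algebra.
From mathcomp Require Import reals exp.
Set Implicit Arguments. Unset Strict Implicit. Unset Printing Implicit Defensive.
Import Order.TTheory GRing.Theory Num.Theory.
Local Open Scope ring_scope.

Section Defs.
Variables (R : realType) (V A : finType).
(* V : the (finite) index set of all variables X; A : common finite alphabet.
   An assignment is x : {ffun V -> A}; a distribution is a pmf on assignments. *)
Notation asg := {ffun V -> A}.

Definition is_pmf (P : asg -> R) : Prop :=
  (forall x, 0 <= P x) /\ \sum_x P x = 1.

Definition marg (P : asg -> R) (S : {set V}) (x : asg) : R :=
  \sum_(y : asg | [forall v in S, y v == x v]) P y.

(* conditional entropy H(Y | Pi) (natural log), terms with P x = 0 vanish *)
Definition condH (P : asg -> R) (Y : V) (Pi : {set V}) : R :=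
  - \sum_x P x * ln (marg P (Y |: Pi) x / marg P Pi x).

(* A structure (DAG) is given by its parent-set function G; u -> v iff u \in G v *)
Definition edge (G : V -> {set V}) : rel V := fun u v => u \in G v.
Definition adj (G : V -> {set V}) : rel V := fun u v => (u \in G v) || (v \in G u).

Definition acyclic (G : V -> {set V}) : Prop :=
  forall u v, u \in G v -> ~~ connect (edge G) v u.

Definition dag (S : {set V}) (k : nat) (G : V -> {set V}) : Prop :=
  [/\ forall v, v \notin S -> G v = set0,
      forall v, G v \subset S :\ v,
      forall v, (#|G v| <= k)%N
    & acyclic G].

Definition score (P : asg -> R) (S : {set V}) (G : V -> {set V}) : R :=
  - \sum_(v in S) condH P v (G v).

(* active (simple) trail s given Z: consecutive nodes adjacent, no repeated node,
   every collider has a descendant (or itself) in Z, every non-collider is not in Z *)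
Definition active_trail (G : V -> {set V}) (Z : {set V}) (s : seq V) : bool :=
  match s with
  | [::] => false
  | x0 :: s' =>
    [&& path (adj G) x0 s', uniq s' && (x0 \notin s') &
     all (fun i => let u := nth x0 s i in let w := nth x0 s i.+1 in
                   let v := nth x0 s i.+2 in
                   if (u \in G w) && (v \in G w)
                   then [exists z in Z, connect (edge G) w z]
                   else w \notin Z)
         (iota 0 (size s).-2)]
  end.

Definition dsep (G : V -> {set V}) (Ab B Z : {set V}) : Prop :=
  forall a b s, a \in Ab -> b \in B -> active_trail G Z (a :: s) -> last a s != b.

Definition markov_eq (S : {set V}) (G1 G2 : V -> {set V}) : Prop :=
  forall Ab B Z : {set V}, Ab \subset S -> B \subset S -> Z \subset S ->
    [disjoint Ab & B] -> [disjoint Ab & Z] -> [disjoint B & Z] ->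
    (dsep G1 Ab B Z <-> dsep G2 Ab B Z).

(* Gstar is in a unique optimal EC among DAGs over S with in-degree <= k
   (scores of the marginal of P on S), with gap at least beta to any other EC *)
Definition opt_EC_gap (P : asg -> R) (S : {set V}) (k : nat) (beta : R)
    (Gstar : V -> {set V}) : Prop :=
  [/\ dag S k Gstar,
      forall G, dag S k G -> score P S G <= score P S Gstar,
      forall G, dag S k G -> score P S G = score P S Gstar -> markov_eq S G Gstar
    & forall G, dag S k G -> ~ markov_eq S G Gstar ->
        score P S G <= score P S Gstar - beta].

Definition unique_opt_EC_gap (P : asg -> R) (S : {set V}) (k : nat) (beta : R) : Prop :=
  exists Gstar, opt_EC_gap P S k beta Gstar.

End Defs.

From mathcomp Require Import all_boot all_order all_algebra.
From mathcomp Require Import reals exp.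
Set Implicit Arguments. Unset Strict Implicit. Unset Printing Implicit Defensive.
Import Order.TTheory GRing.Theory Num.Theory.

(* By (II), X_a is childless in the optimal structure G* over X_1. Deleting
   the family of X_a from G* gives a structure G0 over X_1 \ {X_a}; conversely
   any structure G over X_1 \ {X_a} extends to one over X_1 by giving X_a its
   parents in G*. The family score H(X_a | G*(X_a)) is a common constant, so
   scores shift uniformly, and Markov equivalence is preserved because a
   childless vertex cannot lie inside an active trail: it would be a collider
   whose only descendant is itself. Hence the optimal class and its gap
   transfer. Only the marginal of P on X_1 enters the scores. *)

Definition childless (V : finType) (G : V -> {set V}) (a : V) :=
  forall v, a \notin G v.

Lemma markov_eq_subset (V : finType) (S T : {set V}) G H :
  S \subset T -> markov_eq T G H -> markov_eq S G H.
Proof.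
move=> sST eqGH Ab B Z sA sB sZ; apply: eqGH; exact: subset_trans sST.
Qed.

Section ChildlessVertex.
Variables (V : finType) (a : V).
Implicit Types (S Pa Ab B Z : {set V}) (G H : V -> {set V}) (k : nat).

Lemma connect_childless G z : childless G a -> connect (edge G) a z -> z = a.
Proof.
move=> aG /connectP [[|y p] /= pth ->] //.
by move: pth; rewrite /edge (negbTE (aG y)).
Qed.

Lemma childless_eta G Pa :
  childless G a -> a \notin Pa -> childless [eta G with a |-> Pa] a.
Proof. by move=> aG aPa v /=; case: ifP. Qed.

Lemma eta_agree_off G Pa : {in predC1 a, [eta G with a |-> Pa] =1 G}.
Proof. by move=> v /negbTE /= ->. Qed.

Lemma childless_dag S k G : a \notin S -> dag S k G -> childless G a.
Proof.
by move=> aS [_ sub _ _] v; apply: contra aS => /(subsetP (sub v)) /setD1P [].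
Qed.

Section AgreeOff.
Variables G H : V -> {set V}.
Hypotheses (aG : childless G a) (eqGH : {in predC1 a, G =1 H}).

Lemma connect_agree_off w z :
  z != a -> connect (edge G) w z -> connect (edge H) w z.
Proof.
move=> za /connectP [p pth zp]; apply/connectP; exists p => //.
elim: p w pth zp => [|y p IH] w //= /andP [wy pth] zp.
have ya : y != a.
  apply: contraNneq za => ya; rewrite zp; apply/eqP/(connect_childless aG).
  by rewrite -ya; apply/connectP; exists p.
by move: wy; rewrite /edge (eqGH ya) => -> /=; apply: IH.
Qed.

Lemma acyclic_agree_off : acyclic H -> acyclic G.
Proof.
move=> acH u v uGv; have ua : u != a by apply: contraNneq (aG v) => <-.
have [->|va] := eqVneq v a.
  by apply/negP => /(connect_childless aG) ua'; rewrite ua' eqxx in ua.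
by apply: contra (connect_agree_off ua) (acH u v _); rewrite -(eqGH va).
Qed.

(* An interior occurrence of [a] has both neighbours among its parents, so it
   is a collider whose descendants reduce to [a] itself. *)
Lemma active_trail_childless Z x s : a \notin Z -> last x s != a ->
  active_trail G Z (x :: s) -> a \notin s.
Proof.
move=> aZ la /and3P [pth _ colliders]; apply/negP => a_s.
set j := index a s.
have js : (j < size s)%N by rewrite index_mem.
have sj : nth x s j = a by rewrite nth_index.
have j1s : (j.+1 < size s)%N.
  rewrite ltn_neqAle js andbT; apply: contraNneq la => sz.
  by rewrite -nth_last -sz /= sj.
move/(pathP x): pth => pth.
have := pth j js; have := pth j.+1 j1s.
rewrite /= sj /adj !(negbTE (aG _)) orbF /= => vGa uGa.
move/allP: colliders => /(_ j); rewrite mem_iota add0n /= -ltnS prednK;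
  last exact: leq_ltn_trans js.
move=> /(_ j1s) /=; rewrite sj uGa vGa /=.
case/existsP => z /andP [zZ /(connect_childless aG) za].
by move: aZ; rewrite -za zZ.
Qed.

Lemma active_trail_agree_off Z x s : a \notin Z -> x != a -> last x s != a ->
  active_trail G Z (x :: s) -> active_trail H Z (x :: s).
Proof.
move=> aZ xa la tG.
have nodes_a : all (predC1 a) (x :: s).
  rewrite /= xa; apply/allP => y ys /=.
  by apply: contraNneq (active_trail_childless aZ la tG) => <-.
have nth_a n : nth x (x :: s) n != a.
  have [/(mem_nth x) /(allP nodes_a) //|/(nth_default x) ->] :=
    ltnP n (size (x :: s)).
  exact: xa.
have adjGH : {in predC1 a &, adj G =2 adj H}.
  by move=> u v ua va; rewrite /adj (eqGH ua) (eqGH va).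
move: tG => /and3P [pth uniq_s colliders]; apply/and3P; split => //.
  by rewrite -(eq_in_path adjGH nodes_a).
move: colliders; apply: sub_all => i /=; rewrite -(eqGH (nth_a i.+1)).
case: ifP => // _ /existsP [z /andP [zZ wz]]; apply/existsP; exists z.
by rewrite zZ (connect_agree_off _ wz) //; apply: contraNneq aZ => <-.
Qed.

Lemma dsep_agree_off Ab B Z : a \notin Ab -> a \notin B -> a \notin Z ->
  dsep H Ab B Z -> dsep G Ab B Z.
Proof.
move=> aA aB aZ sepH x b s xA bB tG; apply/negP => /eqP lb.
have xa : x != a by apply: contraNneq aA => <-.
have la : last x s != a by rewrite lb; apply: contraNneq aB => <-.
by move: (sepH x b s xA bB (active_trail_agree_off aZ xa la tG)); rewrite lb eqxx.
Qed.

End AgreeOff.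

Lemma markov_eq_agree_off S G1 G2 H1 H2 : a \notin S ->
  childless G1 a -> childless G2 a -> childless H1 a -> childless H2 a ->
  {in predC1 a, G1 =1 H1} -> {in predC1 a, G2 =1 H2} ->
  markov_eq S G1 G2 -> markov_eq S H1 H2.
Proof.
move=> aS aG1 aG2 aH1 aH2 eq1 eq2 eqG Ab B Z sA sB sZ dAB dAZ dBZ.
have notin_a (X : {set V}) : X \subset S -> a \notin X.
  by move=> sX; apply: contra aS; apply: (subsetP sX).
have [aA aB aZ] := And3 (notin_a _ sA) (notin_a _ sB) (notin_a _ sZ).
have sym (G H : V -> {set V}) : {in predC1 a, G =1 H} -> {in predC1 a, H =1 G}.
  by move=> eqGH v va; rewrite eqGH.
have [G12 G21] := eqG Ab B Z sA sB sZ dAB dAZ dBZ.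
split=> sep.
- apply: (dsep_agree_off aH2 (sym _ _ eq2) aA aB aZ); apply: G12.
  exact: (dsep_agree_off aG1 eq1 aA aB aZ).
- apply: (dsep_agree_off aH1 (sym _ _ eq1) aA aB aZ); apply: G21.
  exact: (dsep_agree_off aG2 eq2 aA aB aZ).
Qed.

Lemma dag_remove_childless S k G :
  childless G a -> dag S k G -> dag (S :\ a) k [eta G with a |-> set0].
Proof.
move=> aG [outS sub deg acG]; split => [v|v|v|] /=.
- by case: eqP => // /eqP va vS; apply: outS; rewrite !inE va in vS.
- case: eqP => _; first exact: sub0set.
  apply/subsetP => u uGv; have ua : u != a by apply: contraNneq (aG v) => <-.
  by move: (subsetP (sub v) u uGv); rewrite !inE ua.
- by case: eqP; rewrite ?cards0.
- apply: acyclic_agree_off acG; last exact: eta_agree_off.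
  by apply: childless_eta; rewrite ?inE.
Qed.

Lemma dag_add_childless S k G Pa : a \in S -> Pa \subset S :\ a ->
  (#|Pa| <= k)%N -> dag (S :\ a) k G -> dag S k [eta G with a |-> Pa].
Proof.
move=> aS sPa degPa dG; have aSa : a \notin S :\ a by rewrite setD11.
have aG := childless_dag aSa dG.
have aPa : a \notin Pa by apply: contra aSa; apply: (subsetP sPa).
case: dG => outS sub deg acG; split => [v|v|v|] /=.
- case: eqP => [-> |/eqP va vS]; first by rewrite aS.
  by apply: outS; rewrite inE (negbTE vS) andbF.
- case: ifP => [/eqP -> //|_].
  apply: subset_trans (sub v) _; exact: setSD (subD1set S a).
- by case: eqP.
- apply: acyclic_agree_off acG; last exact: eta_agree_off.
  exact: childless_eta.
Qed.

End ChildlessVertex.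

Local Open Scope ring_scope.

Section Score.
Variables (R : realType) (V A : finType) (P : {ffun V -> A} -> R).
Implicit Types (S : {set V}) (G H : V -> {set V}).

Lemma score_setD1 S G a :
  a \in S -> score P S G = score P (S :\ a) G - condH P a (G a).
Proof. by move=> aS; rewrite /score (big_setD1 a aS) opprD addrC. Qed.

Lemma eq_score S G H : {in S, G =1 H} -> score P S G = score P S H.
Proof. by move=> eqGH; congr (- _); apply: eq_bigr => v /eqGH ->. Qed.

End Score.

Section RemoveChildless.
Variables (R : realType) (V A : finType) (P : {ffun V -> A} -> R).
Variables (S : {set V}) (k : nat) (beta : R) (a : V) (Gs : V -> {set V}).
Hypotheses (aS : a \in S) (optGs : opt_EC_gap P S k beta Gs)
  (aGs : childless Gs a).

Lemma opt_EC_gap_remove_childless :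
  opt_EC_gap P (S :\ a) k beta [eta Gs with a |-> set0].
Proof.
case: optGs => dGs maxGs eqGs gapGs.
set G0 := [eta Gs with a |-> set0]; set c := condH P a (Gs a).
have aSa : a \notin S :\ a by rewrite setD11.
pose ext G := [eta G with a |-> Gs a].
have off_a G H : {in predC1 a, G =1 H} -> {in S :\ a, G =1 H}.
  by move=> eqGH v /setD1P [va _]; exact: eqGH.
have score_ext G : score P S (ext G) = score P (S :\ a) G - c.
  rewrite (score_setD1 P _ aS) /= eqxx; congr (_ - _).
  exact/eq_score/off_a/eta_agree_off.
have score_Gs : score P S Gs = score P (S :\ a) G0 - c.
  rewrite (score_setD1 P _ aS); congr (_ - _); apply/eq_score/off_a => v va.
  by rewrite eta_agree_off.
have [_ sGs degGs _] := dGs.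
have dag_ext G : dag (S :\ a) k G -> dag S k (ext G).
  exact: dag_add_childless aS (sGs a) (degGs a).
have markov_ext G : dag (S :\ a) k G ->
    markov_eq S (ext G) Gs -> markov_eq (S :\ a) G G0.
  move=> dG /(markov_eq_subset (subD1set S a)).
  have aG := childless_dag aSa dG.
  have aG0 : childless G0 a by apply: childless_eta; rewrite ?inE.
  apply: markov_eq_agree_off aSa (childless_eta aG (aGs a)) aGs aG aG0 _ _.
    exact: eta_agree_off.
  by move=> v va; rewrite eta_agree_off.
split.
- exact: dag_remove_childless.
- move=> G dG; have := maxGs _ (dag_ext G dG).
  by rewrite score_ext score_Gs lerD2r.
- move=> G dG eqs; apply: markov_ext dG (eqGs _ (dag_ext G dG) _).
  by rewrite score_ext score_Gs eqs.
- move=> G dG neq; have := gapGs _ (dag_ext G dG) (contra_not (markov_ext G dG) neq).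
  by rewrite score_ext score_Gs addrAC lerD2r.
Qed.

End RemoveChildless.

Theorem lemma10 (R : realType) (V A : finType) (k : nat) (Xa Xb : V)
    (P : {ffun V -> A} -> R) (alpha beta lambda : R) :
  (0 < k)%N ->
  is_pmf P ->
  Xa != Xb ->
  (k <= #|[set~ Xb]|)%N ->
  0 < alpha -> 0 < beta ->
  (* (I) and (II) for D1 *)
  (exists Gstar, opt_EC_gap P [set~ Xb] k beta Gstar /\
     forall G, dag [set~ Xb] k G -> markov_eq [set~ Xb] G Gstar ->
       forall Y, Xa \notin G Y) ->
  (* (III) *)
  condH P Xa ([set~ Xb] :\ Xa) = alpha ->
  (* lambda in (0, min(alpha, beta/(3d))) *)
  0 < lambda -> lambda < alpha -> lambda < beta / (3 * #|V|%:R) ->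
  (* (IV): hidden Bernoulli C, joint law Q of (X, C) with X-marginal P *)
  (exists Q : {ffun V -> A} -> bool -> R,
     [/\ forall x c, 0 <= Q x c,
         forall x, Q x false + Q x true = P x,
         (* C independent of X1 *)
         forall u c,
           \sum_(x : {ffun V -> A} | [forall v in [set~ Xb], x v == u v]) Q x c =
           (\sum_(x : {ffun V -> A} | [forall v in [set~ Xb], x v == u v]) (Q x false + Q x true)) *
           (\sum_x Q x c),
         (* P[Xb = Xa | C = 1] = 1 *)
         \sum_(x : {ffun V -> A} | x Xb != x Xa) Q x true = 0
       & (* Xb independent of X1 given C = 0 *)
         forall u b,
           (\sum_(x : {ffun V -> A} | [forall v in [set~ Xb], x v == u v] && (x Xb == b)) Q x false) *
           (\sum_x Q x false) =
           (\sum_(x : {ffun V -> A} | x Xb == b) Q x false) *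
           (\sum_(x : {ffun V -> A} | [forall v in [set~ Xb], x v == u v]) Q x false)]) ->
  (* (V) *)
  Num.max (condH P Xb [set Xa]) (condH P Xa [set Xb]) = lambda ->
  unique_opt_EC_gap P ([set~ Xb] :\ Xa) k beta.
Proof.
move=> _ _ ab _ _ _ [Gs [optGs sinkGs]] _ _ _ _ _ _.
have aGs : childless Gs Xa.
  by case: (optGs) => dGs _ _ _ v; apply: (sinkGs Gs dGs) => *.
exists [eta Gs with Xa |-> set0].
by apply: opt_EC_gap_remove_childless optGs aGs; rewrite !inE.
Qed.
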